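(* Let $q=p^e$ with $p$ prime, $e\ge1$, and $0\le s<e$. For $i=1,2$ let $C_i$ be an $[n,k_i,d_i]_q$ linear code over $\mathbb{F}_q$ with generator matrix $G_i$ and parity-check matrix $H_i$. Suppose $k_1+k_2\ge n$ and that either $$\mathrm{rk}\begin{pmatrix}G_1\\ H_2^{(p^{e-s})}\end{pmatrix}\le k_1\quad\text{or}\quad \mathrm{rk}\big(G_1(G_2^{(p^{e-s})})^T\big)=k_1-\dim_{\mathbb{F}_q}(C_1\cap C_2^{\perp_s})\le k_1+k_2-n.$$ Then there exists a quantum code with parameters $[[n,k_1+k_2-n,d]]_q$ with $d\ge\min\{d_1,d_2\}$.
   Context: For a matrix $A=(a_{ij})$ over $\mathbb{F}_q$, $A^{(p^{e-s})}=(a_{ij}^{p^{e-s}})$ (entrywise power), and $A^T$ is the transpose. For $\mathbf{x},\mathbf{y}\in\mathbb{F}_q^n$ the $s$-Galois form is $[\mathbf{x},\mathbf{y}]_s=\sum_{i=1}^n x_iy_i^{p^s}$; for a code $C$, $C^{\perp_s}=\{\mathbf{x}\in\mathbb{F}_q^n: [\mathbf{c},\mathbf{x}]_s=0\ \forall \mathbf{c}\in C\}$. Quantum codes: let $V_n=(\mathbb{C}^q)^{\otimes n}$ with orthonormal basis $\{|\mathbf{c}\rangle:\mathbf{c}\in\mathbb{F}_q^n\}$. For $a,b\in\mathbb{F}_q$ define $X(a)|x\rangle=|x+a\rangle$, $Z(b)|x\rangle=\omega^{\mathrm{tr}(bx)}|x\rangle$ with $\omega=e^{2\pi i/p}$ and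 $\mathrm{tr}:\mathbb{F}_q\to\mathbb{F}_p$ the trace; for $\mathbf{a},\mathbf{b}\in\mathbb{F}_q^n$ let $X(\mathbf{a})=\bigotimes_i X(a_i)$, $Z(\mathbf{b})=\bigotimes_i Z(b_i)$. The error group is $G_n=\{\omega^cX(\mathbf{a})Z(\mathbf{b})\}$, and the weight of $\omega^cX(\mathbf{a})Z(\mathbf{b})$ is the number of $i$ with $(a_i,b_i)\ne(0,0)$. A quantum code with parameters $[[n,k,d]]_q$ is a subspace $Q\subseteq V_n$ of dimension $q^k$ with minimum distance $d$: for all $|u\rangle,|v\rangle\in Q$ with $\langle u|v\rangle=0$ and every $E\in G_n$ of weight at most $d-1$, $\langle u|E|v\rangle=0$ (with the standard purity-based convention when $k=0$). *)

From HB Require Import structures.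
From mathcomp Require Import all_boot all_order all_algebra all_field.
Set Implicit Arguments. Unset Strict Implicit. Unset Printing Implicit Defensive.
Import Order.TTheory GRing.Theory Num.Theory.
Local Open Scope ring_scope.

Section Defs.
Variables (F : finFieldType) (n : nat).

Definition hwt (x : 'rV[F]_n) : nat := #|[set i : 'I_n | x ord0 i != 0]|.

Definition min_dist (m : nat) (G : 'M[F]_(m, n)) (d : nat) : Prop :=
  (exists2 c : 'rV[F]_n, (c <= G)%MS & (c != 0) && (hwt c == d)) /\
  (forall c : 'rV[F]_n, (c <= G)%MS -> c != 0 -> (d <= hwt c)%N).

Definition lin_code_gen_par (k d : nat) (G : 'M[F]_(k, n)) (H : 'M[F]_(n - k, n))
  : Prop :=
  [/\ row_free G, row_free H,
      (forall x : 'rV[F]_n, (x <= G)%MS = (H *m x^T == 0)) & min_dist G d].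

Definition mxpow (r c m : nat) (A : 'M[F]_(r, c)) : 'M[F]_(r, c) :=
  map_mx (fun a => a ^+ m) A.

Definition gform (p s : nat) (x y : 'rV[F]_n) : F :=
  \sum_(i < n) x ord0 i * (y ord0 i) ^+ (p ^ s).

Definition in_gdual (p s m : nat) (G : 'M[F]_(m, n)) (x : 'rV[F]_n) : bool :=
  [forall c : 'rV[F]_n, (c <= G)%MS ==> (gform p s c x == 0)].

Definition dim_cap_gdual (p s m1 m2 : nat) (G1 : 'M[F]_(m1, n)) (G2 : 'M[F]_(m2, n))
  : nat :=
  \dim (<< enum [set x : 'rV[F]_n | (x <= G1)%MS && in_gdual p s G2 x] >>)%VS.

(* trace F_q -> F_p, tr(x) = sum_{i<e} x^(p^i), read as an integer in [0,p) *)
Definition trF (p e : nat) (x : F) : F := \sum_(i < e) x ^+ (p ^ i).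
Definition tr_nat (p e : nat) (x : F) : nat :=
  if [pick k : 'I_p | (k%:R : F) == trF p e x] is Some k then k else 0%N.

(* omega = e^{2 pi i / p} in algC *)
Definition omega (p : nat) : algC := (p.-root (-1)) ^+ 2.

(* state space V_n = (C^q)^{tensor n}: functions F_q^n -> C (coordinates in the
   basis |c>) *)
Definition qstate := {ffun 'rV[F]_n -> algC^o}.

Definition qinner (u v : qstate) : algC := \sum_x (u x)^* * v x.

(* action of  omega^c X(a) Z(b) :
   X(a)Z(b)|x> = omega^{tr(b.x)} |x+a>, so the coordinate at y is
   omega^c omega^{sum_i tr(b_i (y-a)_i)} v(y-a) *)
Definition qerr (p e c : nat) (a b : 'rV[F]_n) (v : qstate) : qstate :=
  [ffun y : 'rV[F]_n => omega p ^+ c *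
             omega p ^+ (\sum_(i < n) tr_nat p e ((b ord0 i * (y - a) ord0 i)%R)) *
             v (y - a)].

Definition qweight (a b : 'rV[F]_n) : nat :=
  #|[set i : 'I_n | (a ord0 i != 0) || (b ord0 i != 0)]|.

(* minimum distance d (purity convention when k = 0) *)
Definition qmin_dist (p e : nat) (Q : {vspace qstate}) (k d : nat) : Prop :=
  if k == 0%N then
    forall u, u \in Q -> forall (c : nat) (a b : 'rV[F]_n),
      (1 <= qweight a b <= d.-1)%N -> qinner u (qerr p e c a b u) = 0
  else
    forall u v, u \in Q -> v \in Q -> qinner u v = 0 ->
      forall (c : nat) (a b : 'rV[F]_n),
        (qweight a b <= d.-1)%N -> qinner u (qerr p e c a b v) = 0.

Definition is_qcode (p e : nat) (Q : {vspace qstate}) (k d : nat) : Prop :=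
  \dim Q = (#|F| ^ k)%N /\ qmin_dist p e Q k d.

End Defs.

From HB Require Import structures.
From mathcomp Require Import all_boot all_order all_algebra all_field.
From mathcomp Require Import zify ring.
Import Order.TTheory GRing.Theory Num.Theory.
Local Open Scope ring_scope.
Set Implicit Arguments. Unset Strict Implicit. Unset Printing Implicit Defensive.

(* Proof idea (the Galois-dual CSS construction).  Let C be the row space of
   A = H2^(p^(e-s)); either hypothesis forces C <= C1.  The code is spanned by
   the coset states |zB + C>, where the rows of B span a complement of C in C1,
   so it has dimension q^(k1 - (n - k2)).  An error X(a)Z(b) of weight below
   min(d1, d2) is harmless: if a <> 0 then a is not a codeword of C1, so the
   error moves the support C1 of the code off itself; if a = 0 and b <> 0, then
   b is not orthogonal to C (otherwise b^(p^s) would be a light nonzero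
   codeword of C2), so the character y |-> omega^tr(b.y) is nontrivial on C
   and averages to zero against the C-invariant states. *)

Section FrobeniusPower.
Variables (F : finFieldType) (p : nat).

(* The proof argument only serves to make the ring morphism instances below
   inferable. *)
Definition frobn of p \in [pchar F] := fun k (x : F) => x ^+ (p ^ k).

Hypothesis pcharFp : p \in [pchar F].

Lemma frobn_is_nmod_morphism k : nmod_morphism (frobn pcharFp k).
Proof.
have p_gt0 := prime_gt0 (pcharf_prime pcharFp).
have pk : [pchar F].-nat (p ^ k)%N.
  by rewrite (eq_pnat _ (pcharf_eq pcharFp)) pnatX pnat_id ?(pcharf_prime pcharFp).
split=> [|x y]; last exact: exprDn_pchar.
by rewrite /frobn expr0n eqn0Ngt expn_gt0 p_gt0.
Qed.

Lemma frobn_is_monoid_morphism k : monoid_morphism (frobn pcharFp k).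
Proof. by split=> [|x y]; rewrite /frobn ?expr1n ?exprMn. Qed.

HB.instance Definition _ k :=
  GRing.isNmodMorphism.Build F F (frobn pcharFp k) (frobn_is_nmod_morphism k).
HB.instance Definition _ k :=
  GRing.isMonoidMorphism.Build F F (frobn pcharFp k) (frobn_is_monoid_morphism k).

Lemma mxpowE k r c (A : 'M[F]_(r, c)) : mxpow (p ^ k) A = map_mx (frobn pcharFp k) A.
Proof. by []. Qed.

Lemma mxrank_mxpow k r c (A : 'M[F]_(r, c)) : \rank (mxpow (p ^ k) A) = \rank A.
Proof. by rewrite mxpowE mxrank_map. Qed.

Variable e : nat.
Hypothesis cardF : #|F| = (p ^ e)%N.

Lemma frobnK k l : (k + l = e)%N -> cancel (frobn pcharFp k) (frobn pcharFp l).
Proof. by move=> kle x; rewrite /frobn -exprM -expnD kle -cardF expf_card. Qed.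

Lemma map_frobnK k l r c : (k + l = e)%N ->
  cancel (map_mx (frobn pcharFp k) : 'M_(r, c) -> _) (map_mx (frobn pcharFp l)).
Proof. by move=> kle A; apply/matrixP => i j; rewrite !mxE frobnK. Qed.

End FrobeniusPower.

Section RowSpaces.
Variables (F : fieldType) (n : nat).

Lemma submx_of_rank_col_mx m1 m2 (A : 'M[F]_(m1, n)) (B : 'M[F]_(m2, n)) :
  (\rank (col_mx A B) <= \rank A)%N -> (B <= A)%MS.
Proof.
rewrite -addsmxE => rkAB.
have /geq_leqif := mxrank_leqif_sup (addsmxSl A B).
by rewrite rkAB addsmx_sub => /esym/andP[].
Qed.

Lemma span_submx m (M : 'M[F]_(m, n)) (X : seq 'rV[F]_n) x :
  {in X, forall y, (y <= M)%MS} -> x \in <<X>>%VS -> (x <= M)%MS.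
Proof.
move=> XM Xx; rewrite (coord_span (X := in_tuple X) Xx).
apply: summx_sub => i _.
by apply/scalemx_sub/XM/mem_nth.
Qed.

Lemma submx_span m (A : 'M[F]_(m, n)) (X : seq 'rV[F]_n) :
  {in X, forall y, (y <= A)%MS} -> (\rank A <= \dim <<X>>)%N ->
  forall y, (y <= A)%MS -> y \in <<X>>%VS.
Proof.
move=> XA rkA y; rewrite -(eq_row_base A) => /submxP[D ->].
pose f := linfun (mulmxr (row_base A) : 'rV_(\rank A) -> 'rV[F]_n).
have Xf : (<<X>> <= limg f)%VS.
  apply/span_subvP => x /XA; rewrite -(eq_row_base A) => /submxP[E ->].
  by rewrite -[E *m _](lfunE (mulmxr _)) memv_img ?memvf.
have dimf : (\dim (limg f) <= \rank A)%N.
  have := limg_ker_dim f fullv; rewrite dimvf /dim /= mul1n => dimE.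
  by rewrite -[X in (_ <= X)%N]dimE leq_addl.
have -> : <<X>>%VS = limg f.
  by apply/eqP; rewrite -(geq_leqif (dimv_leqif_eq Xf)) (leq_trans dimf).
by rewrite -[D *m _](lfunE (mulmxr _)) memv_img ?memvf.
Qed.

Lemma mxrank_diffmx_sub m1 m2 (G : 'M[F]_(m1, n)) (A : 'M[F]_(m2, n)) :
  (A <= G)%MS -> \rank (G :\: A) = (\rank G - \rank A)%N.
Proof. by move/capmx_idPr => GA; rewrite -(mxrank_cap_compl G A) GA addKn. Qed.

Lemma row_base_diffmx_indep m1 m2 (G : 'M[F]_(m1, n)) (A : 'M[F]_(m2, n))
    (w : 'rV_(\rank (G :\: A))) :
  (w *m row_base (G :\: A) <= A)%MS -> w = 0.
Proof.
move=> wA; have : w *m row_base (G :\: A)%MS = 0.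
  apply/eqP; rewrite -submx0 -(capmx_diff G A) sub_capmx wA andbT.
  by rewrite (submx_trans (submxMl _ _)) ?eq_row_base.
by rewrite -(mul0mx _ (row_base (G :\: A)%MS)) => /(row_free_inj (row_base_free _)).
Qed.

End RowSpaces.

Section LinearCodes.
Variables (F : finFieldType) (n k d : nat).
Variables (G : 'M[F]_(k, n)) (H : 'M[F]_(n - k, n)).
Hypothesis code : lin_code_gen_par d G H.

Lemma sub_gen_of_orth (y : 'rV[F]_n) : y *m H^T = 0 -> (y <= G)%MS.
Proof.
by case: code => _ _ genH _ yH; rewrite genH -[H]trmxK -trmx_mul yH trmx0.
Qed.

Lemma parity_mulmx_gen_tr : H *m G^T = 0.
Proof.
case: code => _ _ genH _; apply: trmx_inj; rewrite trmx_mul trmxK trmx0.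
apply/row_matrixP => j; rewrite row_mul row0.
by apply/trmx_inj/eqP; rewrite trmx_mul trmxK trmx0 -genH row_sub.
Qed.

Lemma sub_parity_of_orth (y : 'rV[F]_n) : y *m G^T = 0 -> (y <= H)%MS.
Proof.
case: code => freeG freeH _ _ yG.
have H_ker : (H <= kermx G^T)%MS by apply/sub_kermxP/parity_mulmx_gen_tr.
have /geq_leqif := mxrank_leqif_sup H_ker.
rewrite mxrank_ker mxrank_tr (eqP freeG) (eqP freeH) leqnn => /esym ker_H.
by apply: submx_trans ker_H; apply/sub_kermxP.
Qed.

Lemma rank_gen : \rank G = k.
Proof. by case: code => /eqP. Qed.

Lemma code_dim_le_length : (k <= n)%N.
Proof. by rewrite -rank_gen rank_leq_col. Qed.

Lemma rank_parity : \rank H = (n - k)%N.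
Proof. by case: code => _ /eqP. Qed.

Lemma min_dist_le_hwt (x : 'rV[F]_n) : (x <= G)%MS -> x != 0 -> (d <= hwt x)%N.
Proof. by case: code => _ _ _ [_]; apply. Qed.

End LinearCodes.

Section GaloisDual.
Variables (F : finFieldType) (p e s n : nat).
Hypotheses (pcharFp : p \in [pchar F]) (cardF : #|F| = (p ^ e)%N).
Hypothesis s_le_e : (s <= e)%N.

Lemma gformE (x y : 'rV[F]_n) :
  gform p s x y = (x *m (map_mx (frobn pcharFp s) y)^T) 0 0.
Proof. by rewrite !mxE; apply: eq_bigr => i _; rewrite !mxE. Qed.

Section OneCode.
Variables (k d : nat) (G : 'M[F]_(k, n)) (H : 'M[F]_(n - k, n)).
Hypothesis code : lin_code_gen_par d G H.

Lemma gdual_sub_parity_frob (x : 'rV[F]_n) :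
  in_gdual p s G x -> (x <= mxpow (p ^ (e - s)) H)%MS.
Proof.
move/forallP=> xG.
have xsH : (map_mx (frobn pcharFp s) x <= H)%MS.
  apply: (sub_parity_of_orth code); apply/trmx_inj/row_matrixP => j.
  rewrite trmx_mul trmxK trmx0 row_mul row0; apply/rowP => i.
  rewrite ord1 -gformE mxE; apply/eqP.
  by have := xG (row j G); rewrite row_sub.
by rewrite -[x](map_frobnK pcharFp cardF (subnKC s_le_e)) mxpowE map_submx.
Qed.

Lemma frob_sub_gen_of_orth (b : 'rV[F]_n) :
  b *m (mxpow (p ^ (e - s)) H)^T = 0 -> (mxpow (p ^ s) b <= G)%MS.
Proof.
rewrite !(mxpowE pcharFp) => /(congr1 (map_mx (frobn pcharFp s))).
rewrite map_mxM map_trmx map_mx0 (map_frobnK pcharFp cardF (subnK s_le_e)).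
exact: (sub_gen_of_orth code).
Qed.

End OneCode.

Lemma parity_frob_sub_gen_of_dim_cap k1 k2 d2 (G1 : 'M[F]_(k1, n))
    (G2 : 'M[F]_(k2, n)) (H2 : 'M[F]_(n - k2, n)) :
  lin_code_gen_par d2 G2 H2 ->
  (n - k2 <= dim_cap_gdual p s G1 G2)%N -> (mxpow (p ^ (e - s)) H2 <= G1)%MS.
Proof.
rewrite /dim_cap_gdual; set X := enum _ => code2 dim_cap.
have XG1 : {in X, forall x, (x <= G1)%MS} by move=> x; rewrite mem_enum inE => /andP[].
apply/row_subP => i; apply: (span_submx XG1); apply: submx_span (row_sub i _).
  move=> x; rewrite mem_enum inE => /andP[_].
  exact: gdual_sub_parity_frob code2 x.
by rewrite (mxrank_mxpow pcharFp) (rank_parity code2).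
Qed.

End GaloisDual.

Section PrimeSubfield.
Variables (R : idomainType) (p : nat).
Hypothesis pcharRp : p \in [pchar R].

Lemma natr_inj_mod a b : a%:R = b%:R :> R -> a = b %[mod p].
Proof.
wlog ba : a b / (b <= a)%N => [wlog_ab|ab].
  by case: (leqP b a) => [/wlog_ab//|/ltnW/wlog_ab ba /esym/ba].
by apply/eqP; rewrite eqn_mod_dvd // (dvdn_pcharf pcharRp) natrB // ab subrr.
Qed.

Lemma natr_inj_ltp a b : (a < p)%N -> (b < p)%N -> a%:R = b%:R :> R -> a = b.
Proof. by move=> ap bp /natr_inj_mod; rewrite !modn_small. Qed.

(* The p elements k%:R (k < p) are roots of X^p - X, which has no other root. *)
Lemma frob_fixed_natr (t : R) : t ^+ p = t -> exists2 k, (k < p)%N & k%:R = t.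
Proof.
move=> tp; have p_prime := pcharf_prime pcharRp.
case: (pickP (fun k : 'I_p => k%:R == t)) => [k /eqP kt | not_natr]; first by exists k.
exfalso.
pose P : {poly R} := 'X^p - 'X; pose rs := t :: [seq (k%:R : R) | k <- iota 0 p].
have sizeP : size P = p.+1.
  by rewrite size_polyDl ?size_polyXn // size_polyN size_polyX ltnS prime_gt1.
have rootP : all (root P) rs.
  rewrite /= rootE !hornerE tp subrr eqxx /=; apply/allP => _ /mapP[k _ ->].
  by rewrite rootE !hornerE -(pFrobenius_autE pcharRp) rmorph_nat subrr.
have uniq_rs : uniq rs.
  rewrite /= map_inj_in_uniq ?iota_uniq ?andbT.
    apply/mapP => -[k]; rewrite mem_iota => /andP[_ kp] tk.
    by have := not_natr (Ordinal kp); rewrite /= tk eqxx.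
  by move=> a b; rewrite !mem_iota => /andP[_ ap] /andP[_ bp]; apply: natr_inj_ltp.
have := max_poly_roots _ rootP uniq_rs.
by rewrite -size_poly_eq0 /= size_map size_iota sizeP ltnn => /(_ isT).
Qed.

End PrimeSubfield.

Section FieldTrace.
Variables (F : finFieldType) (p e : nat).
Hypotheses (pcharFp : p \in [pchar F]) (cardF : #|F| = (p ^ e)%N).
Hypothesis e_gt0 : (0 < e)%N.

Lemma trFD (x y : F) : trF p e (x + y) = trF p e x + trF p e y.
Proof.
rewrite /trF -big_split; apply: eq_bigr => i _.
exact: (rmorphD (frobn pcharFp i)).
Qed.

Lemma trF_frob (x : F) : trF p e x ^+ p = trF p e x.
Proof.
rewrite /trF -(pFrobenius_autE pcharFp) rmorph_sum /=.
case: e cardF e_gt0 => // e' cardF' _.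
rewrite big_ord_recr big_ord_recl /= pFrobenius_autE -exprM -expnSr -cardF'.
rewrite expf_card expn0 expr1 addrC; congr (_ + _); apply: eq_bigr => i _.
by rewrite pFrobenius_autE -exprM -expnSr.
Qed.

Lemma tr_nat_spec (x : F) :
  (tr_nat p e x < p)%N /\ (tr_nat p e x)%:R = trF p e x.
Proof.
rewrite /tr_nat; case: pickP => [k /eqP -> | not_natr]; first by [].
have [k kp kx] := frob_fixed_natr pcharFp (trF_frob x).
by have := not_natr (Ordinal kp); rewrite /= kx eqxx.
Qed.

Lemma tr_natD (x y : F) :
  tr_nat p e (x + y) = (tr_nat p e x + tr_nat p e y)%N %[mod p].
Proof.
by apply: (natr_inj_mod pcharFp); rewrite natrD !(proj2 (tr_nat_spec _)) trFD.
Qed.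

Lemma tr_nat0 : tr_nat p e (0 : F) = 0%N.
Proof.
have [trp trE] := tr_nat_spec 0; have p_gt0 := prime_gt0 (pcharf_prime pcharFp).
apply: (natr_inj_ltp pcharFp) => //; rewrite trE.
by apply: big1 => i _; exact: (rmorph0 (frobn pcharFp i)).
Qed.

(* The trace is a polynomial function of degree p^(e-1) < #|F|, hence not zero. *)
Lemma trF_neq0 : exists x : F, trF p e x != 0.
Proof.
have p_gt1 := prime_gt1 (pcharf_prime pcharFp).
case: (pickP (fun x : F => trF p e x != 0)) => [x trFx | trF0]; first by exists x.
case: e cardF e_gt0 trF0 => // e' cardF' _ trF0.
pose P : {poly F} := \sum_(i < e'.+1) 'X^(p ^ i).
have P_neq0 : P != 0.
  apply/eqP => /(congr1 (fun q : {poly F} => q`_(p ^ e'))).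
  rewrite coef0 coef_sum (bigD1 ord_max) //= coefXn eqxx big1 ?addr0.
    by apply/eqP; rewrite oner_eq0.
  move=> i /eqP neq_i; rewrite coefXn eqn_exp2l //.
  by case: eqP => // e_i; case: neq_i; apply: val_inj; rewrite /= -e_i.
have sizeP : (size P <= (p ^ e').+1)%N.
  apply: leq_trans (size_sum _ _ _) _; apply/bigmax_leqP => i _.
  by rewrite size_polyXn ltnS leq_pexp2l ?(ltnW p_gt1) // -ltnS.
have rootP : all (root P) (enum F).
  apply/allP => x _; rewrite rootE horner_sum.
  by under eq_bigr do rewrite hornerXn; apply/negbFE/trF0.
exfalso; have := max_poly_roots P_neq0 rootP (enum_uniq F); rewrite -cardT cardF' expnS.
have : (0 < p ^ e')%N by rewrite expn_gt0 (ltnW p_gt1).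
move: (p ^ e')%N (size P) sizeP => m sz; nia.
Qed.

End FieldTrace.

Section PrimitiveRoot.
Variable p : nat.
Hypothesis p_prime : prime p.

Lemma omega_expr_p : omega p ^+ p = 1.
Proof. by rewrite /omega exprAC rootCK ?prime_gt0 // sqrrN expr1n. Qed.

(* [p.-root] picks the p-th root of -1 of largest real part in the upper
   half-plane; a primitive 2p-th root of unity beats -1. *)
Lemma rootCN1_neqN1 : p.-root (-1 : algC) != -1.
Proof.
have p_gt1 := prime_gt1 p_prime; have p_gt0 := ltnW p_gt1.
have [w w_prim] : {w : algC | (2 * p).-primitive_root w}.
  by apply: C_prim_root_exists; rewrite muln_gt0 p_gt0.
have wp : w ^+ p = -1.
  have /eqP := prim_expr_order w_prim; rewrite mulnC exprM sqrf_eq1.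
  case/orP=> /eqP // wp1; have := prim_order_dvd w_prim p.
  by rewrite wp1 eqxx => /(dvdn_leq p_gt0); rewrite leqNgt ltn_Pmull.
have w_neqN1 : w != -1.
  apply/eqP => wN1; have := prim_order_dvd w_prim 2.
  rewrite wN1 sqrrN expr1n eqxx => /(dvdn_leq (ltn0Sn 1)).
  by rewrite -[X in (_ <= X)%N]muln1 leq_pmul2l // leqNgt p_gt1.
wlog Im_w : w wp w_neqN1 {w_prim} / 0 <= 'Im w => [wlog_Im|].
  case: (boolP (0 <= 'Im w)) => [|Im_w]; first exact: wlog_Im.
  apply: (wlog_Im w^*); first by rewrite -rmorphXn wp rmorphN1.
    by rewrite -(inj_eq (inv_inj (@conjCK _))) conjCK rmorphN1.
  by rewrite Im_conj oppr_ge0 ltW // real_ltNge ?Creal_Im.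
apply/eqP => rootN1; have := rootC_Re_max p_gt0 wp Im_w.
rewrite rootN1 raddfN /= (Creal_ReP 1 (rpred1 _)) lerNr -raddfN /=.
have norm_w : `|w| = 1.
  by apply/eqP; rewrite -(pexpr_eq1 p_gt0) // -normrX wp normrN normr1.
have [Re_le1 Re_eq1] := leif_Re_Creal (- w); rewrite normrN norm_w in Re_le1 Re_eq1.
move=> Re_ge1; have /ger0_norm : 0 <= - w by rewrite -Re_eq1 eq_le Re_le1 Re_ge1.
rewrite normrN norm_w => /esym/eqP; rewrite eqr_oppLR => /eqP wN1.
by rewrite wN1 eqxx in w_neqN1.
Qed.

Lemma omega_neq1 : omega p != 1.
Proof.
rewrite /omega sqrf_eq1 negb_or rootCN1_neqN1 andbT; apply/eqP => root1.
have /eqP := rootCK (prime_gt0 p_prime) (-1 : algC).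
by rewrite root1 expr1n gt_eqF // (lt_trans (ltrN10 _) ltr01).
Qed.

Lemma omega_prim_root : p.-primitive_root (omega p).
Proof.
have [m m_prim m_dvd_p] := prim_order_exists (prime_gt0 p_prime) omega_expr_p.
have [m1 | m_neq1] := eqVneq m 1%N.
  by have := prim_expr_order m_prim; rewrite m1 expr1 => /eqP; rewrite (negPf omega_neq1).
by move/(prime_nt_dvdP p_prime m_neq1): m_dvd_p => mp; rewrite mp in m_prim.
Qed.

End PrimitiveRoot.

Section TraceCharacter.
Variables (F : finFieldType) (p e n : nat).
Hypotheses (pcharFp : p \in [pchar F]) (cardF : #|F| = (p ^ e)%N).
Hypothesis e_gt0 : (0 < e)%N.

Lemma omega_tr_natD (x y : F) :
  omega p ^+ tr_nat p e (x + y) = omega p ^+ tr_nat p e x * omega p ^+ tr_nat p e y.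
Proof.
have omega_prim := omega_prim_root (pcharf_prime pcharFp).
by rewrite -(prim_expr_mod omega_prim) (tr_natD pcharFp cardF) // prim_expr_mod // exprD.
Qed.

Definition tr_char (b y : 'rV[F]_n) : algC :=
  omega p ^+ (\sum_(i < n) tr_nat p e (b ord0 i * y ord0 i)%R).

Lemma tr_charE b y : tr_char b y = omega p ^+ tr_nat p e (\sum_i b ord0 i * y ord0 i)%R.
Proof.
rewrite /tr_char expr_sum; apply/esym/(big_morph (fun x => omega p ^+ tr_nat p e x)).
  exact: omega_tr_natD.
by rewrite (tr_nat0 pcharFp cardF).
Qed.

Lemma tr_charD b y z : tr_char b (y + z) = tr_char b y * tr_char b z.
Proof.
rewrite !tr_charE -omega_tr_natD -big_split /=.
by congr (_ ^+ tr_nat _ _ _); apply: eq_bigr => i _; rewrite mxE mulrDr.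
Qed.

Lemma tr_char0l y : tr_char 0 y = 1.
Proof. by rewrite tr_charE big1 ?(tr_nat0 pcharFp cardF) // => i _; rewrite mxE mul0r. Qed.

(* Scale a row of A so that its pairing with b has nonzero trace. *)
Lemma tr_char_neq1 m (A : 'M[F]_(m, n)) b :
  b *m A^T != 0 -> exists2 a, (a <= A)%MS & tr_char b a != 1.
Proof.
move=> bA_neq0; have [j bAj] : exists j, (b *m A^T) 0 j != 0.
  case: (pickP (fun j => (b *m A^T) 0 j != 0)) => [j ? | bA0]; first by exists j.
  by case/eqP: bA_neq0; apply/rowP => j; rewrite [RHS]mxE; apply/eqP/negbFE/bA0.
have [mu trF_mu] := trF_neq0 pcharFp cardF e_gt0.
exists ((mu / (b *m A^T) 0 j) *: row j A); first exact/scalemx_sub/row_sub.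
rewrite tr_charE; have -> : \sum_i b ord0 i * ((mu / (b *m A^T) 0 j) *: row j A) ord0 i = mu.
  rewrite -[RHS](divfK bAj) mulrC mxE mulr_sumr; apply: eq_bigr => i _.
  by rewrite !mxE mulrCA.
rewrite -(prim_order_dvd (omega_prim_root (pcharf_prime pcharFp))).
have [tr_lt_p trE] := tr_nat_spec pcharFp cardF e_gt0 mu.
by apply: contra trF_mu; rewrite -trE /dvdn modn_small // => /eqP->.
Qed.
End TraceCharacter.

Section Weights.
Variables (F : finFieldType) (n : nat).

Lemma hwt_gt0 (x : 'rV[F]_n) : x != 0 -> (0 < hwt x)%N.
Proof.
apply: contraR; rewrite -leqNgt leqn0 => /eqP/cards0_eq/setP hwt0.
apply/eqP/rowP => i; have := hwt0 i; rewrite !inE mxE ord1.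
by move/negbT; rewrite negbK => /eqP.
Qed.

Lemma hwt_le_qweightl (a b : 'rV[F]_n) : (hwt a <= qweight a b)%N.
Proof. by apply/subset_leq_card/subsetP => i; rewrite !inE => ->. Qed.

Lemma hwt_le_qweightr (a b : 'rV[F]_n) : (hwt b <= qweight a b)%N.
Proof. by apply/subset_leq_card/subsetP => i; rewrite !inE orbC => ->. Qed.

Lemma qweight00 : qweight (0 : 'rV[F]_n) 0 = 0%N.
Proof. by apply: eq_card0 => i; rewrite !inE !mxE eqxx. Qed.

Lemma hwt_frobn p (pcharFp : p \in [pchar F]) k (x : 'rV[F]_n) :
  hwt (map_mx (frobn pcharFp k) x) = hwt x.
Proof. by apply: eq_card => i; rewrite !inE mxE fmorph_eq0. Qed.

End Weights.

Section CosetStates.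
Variables (F : finFieldType) (n m r : nat).
Variables (A : 'M[F]_(m, n)) (B : 'M[F]_(r, n)).

Lemma scale_qstateE (k : algC) (f : qstate F n) y : (k *: f) y = k * f y.
Proof. by rewrite ffunE. Qed.

Definition coset_state (z : 'rV[F]_r) : qstate F n :=
  [ffun y => if (y - z *m B <= A)%MS then 1 else 0].

Definition coset_states := [tuple coset_state (enum_val i) | i < #|{: 'rV[F]_r}|].

Lemma free_coset_states :
  (forall w : 'rV[F]_r, (w *m B <= A)%MS -> w = 0) -> free coset_states.
Proof.
move=> B_indep; apply/freeP => k k_eq0 i.
have := congr1 (fun f : qstate F n => f (enum_val i *m B)) k_eq0.
rewrite sum_ffunE ffunE (bigD1 i) //= big1 ?addr0.
  by rewrite scale_qstateE nth_mktuple ffunE subrr sub0mx mulr1.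
move=> j j_neq_i; rewrite scale_qstateE nth_mktuple ffunE -mulmxBl.
case: ifP => [/B_indep/eqP|]; last by rewrite mulr0.
by rewrite subr_eq0 => /eqP/enum_val_inj ij; rewrite ij eqxx in j_neq_i.
Qed.

Lemma dim_coset_span :
  (forall w : 'rV[F]_r, (w *m B <= A)%MS -> w = 0) ->
  \dim <<coset_states>> = (#|F| ^ r)%N.
Proof. by move/free_coset_states/eqnP->; rewrite size_tuple card_mx mul1n. Qed.

Lemma coset_span_supp k (G : 'M[F]_(k, n)) u :
  (A <= G)%MS -> (B <= G)%MS -> u \in <<coset_states>>%VS ->
  forall y, ~~ (y <= G)%MS -> u y = 0.
Proof.
move=> AG BG /coord_span-> y yG; rewrite sum_ffunE; apply: big1 => i _.
rewrite scale_qstateE nth_mktuple ffunE; case: ifP => [yA|]; last by rewrite mulr0.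
case/negP: yG; rewrite -[y](subrK (enum_val i *m B)).
by apply: addmx_sub; [exact: submx_trans AG | exact: submx_trans (submxMl _ _) BG].
Qed.

Lemma coset_span_transl u :
  u \in <<coset_states>>%VS -> forall y a, (a <= A)%MS -> u (y + a) = u y.
Proof.
move=> /coord_span-> y a aA; rewrite !sum_ffunE; apply: eq_bigr => i _.
suff addA x : ((x + a)%R <= A)%MS = (x <= A)%MS.
  by rewrite !scale_qstateE !nth_mktuple !ffunE addrAC addA.
apply/idP/idP => xA; last exact: addmx_sub.
by rewrite -[x](addrK a) addmx_sub // eqmx_opp.
Qed.

End CosetStates.

Section ErrorOperators.
Variables (F : finFieldType) (p e n : nat).
Hypotheses (pcharFp : p \in [pchar F]) (cardF : #|F| = (p ^ e)%N).
Hypothesis e_gt0 : (0 < e)%N.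
Implicit Types (u v : qstate F n) (a b : 'rV[F]_n).

Lemma qerrE c a b v y :
  qerr p e c a b v y = omega p ^+ c * tr_char p e b (y - a) * v (y - a).
Proof. by rewrite ffunE. Qed.

Lemma qinner_qerr00 c u v : qinner u (qerr p e c 0 0 v) = omega p ^+ c * qinner u v.
Proof.
rewrite /qinner mulr_sumr; apply: eq_bigr => x _.
by rewrite qerrE subr0 (tr_char0l pcharFp cardF e_gt0) mulr1 mulrCA.
Qed.

Lemma qinner_qerr_out_supp k (G : 'M[F]_(k, n)) c a b u v :
  (forall y, ~~ (y <= G)%MS -> u y = 0) -> (forall y, ~~ (y <= G)%MS -> v y = 0) ->
  ~~ (a <= G)%MS -> qinner u (qerr p e c a b v) = 0.
Proof.
move=> u_supp v_supp aG; apply: big1 => x _; rewrite qerrE.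
have [xG | /u_supp->] := boolP (x <= G)%MS; last by rewrite conjC0 mul0r.
rewrite v_supp ?mulr0 //; apply: contra aG => xaG.
by rewrite -[a](subKr x) addmx_sub // eqmx_opp.
Qed.

(* Translating the summation variable by a0 in A multiplies the sum by
   tr_char b a0 != 1, so the sum vanishes. *)
Lemma qinner_qerr_phase m (A : 'M[F]_(m, n)) c b u v :
  (forall y a, (a <= A)%MS -> u (y + a) = u y) ->
  (forall y a, (a <= A)%MS -> v (y + a) = v y) ->
  b *m A^T != 0 -> qinner u (qerr p e c 0 b v) = 0.
Proof.
move=> u_transl v_transl bA; have [a0 a0A chi_a0] := tr_char_neq1 pcharFp cardF e_gt0 bA.
pose T := \sum_x (u x)^* * v x * tr_char p e b x.
have T_a0 : T = T * tr_char p e b a0.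
  rewrite {1}/T (reindex_inj (addIr a0)) /= mulr_suml; apply: eq_bigr => x _.
  by rewrite u_transl // v_transl // (tr_charD pcharFp cardF e_gt0) mulrA.
have T0 : T = 0.
  apply/eqP; move/eqP: T_a0; rewrite -subr_eq0 -{1}[T]mulr1 -mulrBr mulf_eq0.
  by rewrite subr_eq0 [1 == _]eq_sym (negPf chi_a0) orbF.
rewrite -[RHS](mulr0 (omega p ^+ c)) -T0 /qinner mulr_sumr; apply: eq_bigr => x _.
by rewrite qerrE subr0; ring.
Qed.

End ErrorOperators.

Section GaloisCssCode.
Variables (F : finFieldType) (p e s n k1 k2 d1 d2 : nat).
Hypotheses (pcharFp : p \in [pchar F]) (cardF : #|F| = (p ^ e)%N).
Hypotheses (e_gt0 : (0 < e)%N) (s_le_e : (s <= e)%N).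
Variables (G1 : 'M[F]_(k1, n)) (H1 : 'M[F]_(n - k1, n)).
Variables (G2 : 'M[F]_(k2, n)) (H2 : 'M[F]_(n - k2, n)).
Hypotheses (code1 : lin_code_gen_par d1 G1 H1) (code2 : lin_code_gen_par d2 G2 H2).
Variables (r : nat) (B : 'M[F]_(r, n)).
Hypothesis B_sub_G1 : (B <= G1)%MS.
Hypothesis A_sub_G1 : (mxpow (p ^ (e - s)) H2 <= G1)%MS.

Local Notation Q := <<coset_states (mxpow (p ^ (e - s)) H2) B>>%VS.

Lemma qinner_qerr_coset_code u v c a b :
  u \in Q -> v \in Q -> (qweight a b <= (minn d1 d2).-1)%N ->
  (a = 0 -> b = 0 -> qinner u v = 0) -> qinner u (qerr p e c a b v) = 0.
Proof.
move=> uQ vQ wt_ab uv.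
have [a0 | a_neq0] := eqVneq a 0; last first.
  apply: (qinner_qerr_out_supp p e c b (coset_span_supp A_sub_G1 B_sub_G1 uQ)).
    exact: coset_span_supp A_sub_G1 B_sub_G1 vQ.
  apply/negP => aG1; have := min_dist_le_hwt code1 aG1 a_neq0.
  by have := hwt_gt0 a_neq0; have := hwt_le_qweightl a b; lia.
have [b0 | b_neq0] := eqVneq b 0.
  by rewrite a0 b0 (qinner_qerr00 pcharFp cardF e_gt0) uv ?mulr0.
rewrite a0.
apply: (qinner_qerr_phase pcharFp cardF e_gt0 c (coset_span_transl uQ)).
  exact: coset_span_transl vQ.
apply/negP => /eqP /(frob_sub_gen_of_orth pcharFp cardF s_le_e code2).
rewrite mxpowE => /(min_dist_le_hwt code2).
rewrite map_mx_eq0 hwt_frobn => /(_ b_neq0).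
by have := hwt_gt0 b_neq0; have := hwt_le_qweightr a b; lia.
Qed.

Lemma qmin_dist_coset_code k : qmin_dist p e Q k (minn d1 d2).
Proof.
rewrite /qmin_dist; case: ifP => _.
  move=> u uQ c a b /andP[wt_gt0 wt_ab].
  by apply: qinner_qerr_coset_code => // a0 b0; rewrite a0 b0 qweight00 in wt_gt0.
by move=> u v uQ vQ uv c a b wt_ab; apply: qinner_qerr_coset_code.
Qed.

End GaloisCssCode.

Theorem theorem2p6 (F : finFieldType) (p e s n k1 k2 d1 d2 : nat)
  (G1 : 'M[F]_(k1, n)) (H1 : 'M[F]_(n - k1, n))
  (G2 : 'M[F]_(k2, n)) (H2 : 'M[F]_(n - k2, n)) :
  prime p -> p \in [pchar F] -> #|F| = (p ^ e)%N -> (0 < e)%N -> (s < e)%N ->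
  lin_code_gen_par d1 G1 H1 ->
  lin_code_gen_par d2 G2 H2 ->
  (n <= k1 + k2)%N ->
  ((\rank (col_mx G1 (mxpow (p ^ (e - s)) H2)) <= k1)%N \/
   (\rank (G1 *m (mxpow (p ^ (e - s)) G2)^T) = (k1 - dim_cap_gdual p s G1 G2)%N /\
    (k1 - dim_cap_gdual p s G1 G2 <= k1 + k2 - n)%N)) ->
  exists (d : nat) (Q : {vspace qstate F n}),
    is_qcode p e Q (k1 + k2 - n) d /\ (minn d1 d2 <= d)%N.
Proof.
move=> _ pcharFp cardF e_gt0 /ltnW s_le_e code1 code2 n_le_k hyp.
set A := mxpow (p ^ (e - s)) H2 in hyp *.
have A_sub_G1 : (A <= G1)%MS.
  case: hyp => [rk_col | [_ dim_cap]].
    by apply: submx_of_rank_col_mx; rewrite (rank_gen code1).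
  apply: (parity_frob_sub_gen_of_dim_cap pcharFp cardF s_le_e code2); lia.
set B := row_base (G1 :\: A)%MS.
have B_sub_G1 : (B <= G1)%MS by rewrite eq_row_base diffmxSl.
exists (minn d1 d2), <<coset_states A B>>%VS; split => //; split.
  rewrite dim_coset_span; last exact: row_base_diffmx_indep.
  rewrite mxrank_diffmx_sub // (rank_gen code1).
  rewrite (mxrank_mxpow pcharFp) (rank_parity code2); congr expn.
  by have := code_dim_le_length code2; lia.
exact: (qmin_dist_coset_code pcharFp cardF e_gt0 s_le_e code1 code2 B_sub_G1 A_sub_G1).
Qed.
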